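(* Let $0<q<1/2$, $p=1-q$ and $z\ge1$ an integer. Define $$P(z)=1-\sum_{k=0}^{z-1}\left(p^zq^k-q^zp^k\right)\binom{k+z-1}{k},\qquad P_{SN}(z)=1-\sum_{k=0}^{z-1}e^{-zq/p}\frac{(zq/p)^k}{k!}\left(1-\left(\frac qp\right)^{z-k}\right),$$ and for $\kappa>0$ $$P(z,\kappa)=1-\sum_{k=0}^{z-1}\left(1-\left(\frac qp\right)^{z-k}\right)\frac{\mu^k}{k!}e^{-\mu},\qquad \mu=\kappa z\frac qp.$$ Then $P_{SN}(z)=P(z,1)$ and $$P(z)=\int_0^{+\infty}P(z,\kappa)\,d\rho_z(\kappa),\qquad d\rho_z(\kappa)=\frac{z^z}{(z-1)!}\kappa^{z-1}e^{-z\kappa}\,d\kappa.$$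
   Context: $P(z)$ is the exact probability of success of a double-spend attack (attacker relative hash power $q$, honest $p$) after $z$ confirmations; $P_{SN}(z)$ is Nakamoto's approximation of it; $P(z,\kappa)$ is the success probability conditional on the $z$ honest blocks having taken $\kappa$ times their expected total time. *)

From Stdlib Require Import Reals.
From Coquelicot Require Import Coquelicot.
Open Scope R_scope.

(* Sums over k = 0 .. z-1 are written  sum_f_R0 f (z-1)  (z >= 1),
   since sum_f_R0 f n = f 0 + ... + f n. *)

Definition P_exact (q : R) (z : nat) : R :=
  let p := 1 - q in
  1 - sum_f_R0 (fun k => (p ^ z * q ^ k - q ^ z * p ^ k) * Binomial.C (k + z - 1) k)
        (z - 1).

Definition P_SN (q : R) (z : nat) : R :=
  let p := 1 - q in
  let lam := INR z * q / p in
  1 - sum_f_R0 (fun k => exp (- lam) * lam ^ k / INR (Factorial.fact k) * (1 - (q / p) ^ (z - k)))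
        (z - 1).

Definition P_kappa (q : R) (z : nat) (kappa : R) : R :=
  let p := 1 - q in
  let mu := kappa * INR z * (q / p) in
  1 - sum_f_R0 (fun k => (1 - (q / p) ^ (z - k)) * (mu ^ k / INR (Factorial.fact k)) * exp (- mu))
        (z - 1).

Definition rho_density (z : nat) (kappa : R) : R :=
  INR z ^ z / INR (Factorial.fact (z - 1)) * kappa ^ (z - 1) * exp (- INR z * kappa).

(** Given the honest time [kappa], the attacker's block count is Poisson with mean
    [kappa z q / p]; the total time of [z] honest blocks is Gamma-distributed with
    shape [z] and rate [z], i.e. has density [rho_density z].  A Poisson law mixed
    over a Gamma-distributed mean is negative binomial: integrating the Poisson weight
    of [k] against [rho_density z] gives [C(k+z-1, k) p^z q^k].  Integrating
    [P(z, kappa)] term by term therefore reproduces the sum defining [P(z)].  All the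
    integrals reduce to the Gamma integral [int_0^oo x^n e^(-a x) dx = n! / a^(n+1)]. *)

From Stdlib Require Import Reals Lra Lia.
From Coquelicot Require Import Coquelicot.
Open Scope R_scope.

Lemma pow_div_fact_le_exp (y : R) (n : nat) :
  0 <= y -> y ^ n / INR (Factorial.fact n) <= exp y.
Proof.
  intros Hy. destruct n as [|n].
  - simpl. assert (H := exp_ineq1_le y). lra.
  - assert (Htaylor := exp_ge_taylor y (S n) Hy). rewrite tech5 in Htaylor.
    assert (0 <= sum_f_R0 (fun k => y ^ k / INR (Factorial.fact k)) n).
    { apply cond_pos_sum. intros k. apply Rmult_le_pos.
      - apply pow_le; lra.
      - left; apply Rinv_0_lt_compat, INR_fact_lt_0. }
    lra.
Qed.

Lemma is_RInt_gen_ext_R {Fa Fb : (R -> Prop) -> Prop} {FFa : Filter Fa} {FFb : Filter Fb}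
    (f g : R -> R) (l : R) :
  (forall x, f x = g x) -> is_RInt_gen f Fa Fb l -> is_RInt_gen g Fa Fb l.
Proof.
  intros Hfg. apply is_RInt_gen_ext, filter_forall. intros ab x _. apply Hfg.
Qed.

Section GammaIntegral.

Variable a : R.
Hypothesis a_pos : 0 < a.

Lemma is_lim_pow_mul_exp_opp (n : nat) :
  is_lim (fun x => x ^ n * exp (- a * x)) p_infty 0.
Proof.
  set (M := INR (Factorial.fact (S n)) / a ^ S n).
  apply (is_lim_le_le_loc (fun _ => 0) (fun x => M * / x)).
  - exists 0. intros x Hx. split.
    + apply Rmult_le_pos; [apply pow_le; lra | left; apply exp_pos].
    + (* from [exp (a x) >= (a x)^(n+1) / (n+1)!] *)
      assert (Hexp := pow_div_fact_le_exp (a * x) (S n) ltac:(nra)).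
      assert (Hfact := INR_fact_lt_0 (S n)).
      assert (Han : 0 < a ^ n) by (apply pow_lt; lra).
      assert (Hxn : 0 < x ^ n) by (apply pow_lt; lra).
      assert (Hax : 0 < exp (a * x)) by apply exp_pos.
      replace (- a * x) with (- (a * x)) by ring. rewrite exp_Ropp.
      rewrite Rpow_mult_distr in Hexp. unfold M. simpl pow in Hexp |- *.
      apply Rle_div_l in Hexp; [|lra].
      apply (Rmult_le_reg_r (exp (a * x) * (a * a ^ n) * x)).
      { apply Rmult_lt_0_compat; [apply Rmult_lt_0_compat|]; nra. }
      field_simplify; [lra | repeat split; lra | lra].
  - apply is_lim_const.
  - replace (Finite 0) with (Rbar_mult M (Rbar_inv p_infty)) by (simpl; f_equal; ring).
    apply is_lim_scal_l, is_lim_inv; [apply is_lim_id | discriminate].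
Qed.

(** Obtained by repeated integration by parts. *)
Fixpoint gamma_primitive (n : nat) (x : R) : R :=
  match n with
  | O => - exp (- a * x) / a
  | S m => - (x ^ S m * exp (- a * x)) / a + INR (S m) / a * gamma_primitive m x
  end.

Lemma is_derive_gamma_primitive (n : nat) (x : R) :
  is_derive (gamma_primitive n) x (x ^ n * exp (- a * x)).
Proof.
  induction n as [|m IH].
  - simpl. auto_derive; auto. field. lra.
  - evar (d : R).
    assert (Hhead : is_derive (fun x => - (x ^ S m * exp (- a * x)) / a) x d).
    { auto_derive; auto. unfold d. reflexivity. }
    unfold d in Hhead.
    assert (H := is_derive_plus _ _ x _ _ Hhead
                   (is_derive_scal (gamma_primitive m) x (INR (S m) / a) _ IH)).
    match type of H with is_derive _ _ ?v => replace (x ^ S m * exp (- a * x)) with v end.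
    + exact H.
    + unfold plus, scal; simpl; unfold mult; simpl. field. lra.
Qed.

Lemma gamma_primitive_0 (n : nat) :
  gamma_primitive n 0 = - INR (Factorial.fact n) / a ^ S n.
Proof.
  induction n as [|m IH].
  - simpl. rewrite Rmult_0_r, exp_0. field. lra.
  - cbn [gamma_primitive]. rewrite IH.
    change (Factorial.fact (S m)) with (S m * Factorial.fact m)%nat.
    rewrite mult_INR. simpl pow. field. split; [apply pow_nonzero|]; lra.
Qed.

Lemma is_lim_gamma_primitive (n : nat) : is_lim (gamma_primitive n) p_infty 0.
Proof.
  induction n as [|m IH].
  - apply (is_lim_ext (fun x => (-1 / a) * (x ^ 0 * exp (- a * x)))).
    { intros y. simpl. field. lra. }
    replace (Finite 0) with (Rbar_mult (-1 / a) 0) by (simpl; f_equal; ring).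
    apply is_lim_scal_l, is_lim_pow_mul_exp_opp.
  - apply (is_lim_ext (fun x => (-1 / a) * (x ^ S m * exp (- a * x))
                                + INR (S m) / a * gamma_primitive m x)).
    { intros y. cbn [gamma_primitive]. field. lra. }
    replace (Finite 0) with (Finite (-1 / a * 0 + INR (S m) / a * 0)) by (f_equal; ring).
    apply is_lim_plus'.
    + apply (is_lim_scal_l _ _ p_infty 0), is_lim_pow_mul_exp_opp.
    + apply (is_lim_scal_l _ _ p_infty 0), IH.
Qed.

Lemma is_RInt_gen_pow_mul_exp_opp (n : nat) :
  is_RInt_gen (fun x => x ^ n * exp (- a * x)) (at_point 0) (Rbar_locally p_infty)
    (INR (Factorial.fact n) / a ^ S n).
Proof.
  assert (Hderive : forall x, Derive (gamma_primitive n) x = x ^ n * exp (- a * x)).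
  { intros x. apply is_derive_unique, is_derive_gamma_primitive. }
  apply (is_RInt_gen_ext_R (Derive (gamma_primitive n))); [apply Hderive|].
  replace (INR (Factorial.fact n) / a ^ S n) with (0 - gamma_primitive n 0)
    by (rewrite gamma_primitive_0; field; apply pow_nonzero; lra).
  apply is_RInt_gen_Derive.
  - apply filter_forall. intros ab x _. eexists. apply is_derive_gamma_primitive.
  - apply filter_forall. intros ab x _.
    apply (continuous_ext (fun x => x ^ n * exp (- a * x))).
    { intros y. symmetry. apply Hderive. }
    apply (ex_derive_continuous (K := R_AbsRing) (V := R_NormedModule)). auto_derive. auto.
  - intros P HP. exact (locally_singleton _ _ HP).
  - apply is_lim_gamma_primitive.
Qed.

End GammaIntegral.

Lemma is_RInt_gen_sum_f_R0 {Fa Fb : (R -> Prop) -> Prop} {FFa : Filter Fa} {FFb : Filter Fb}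
    (f : nat -> R -> R) (l : nat -> R) (N : nat) :
  (forall k, (k <= N)%nat -> is_RInt_gen (f k) Fa Fb (l k)) ->
  is_RInt_gen (fun x => sum_f_R0 (fun k => f k x) N) Fa Fb (sum_f_R0 l N).
Proof.
  induction N as [|N IH]; intros Hf.
  - apply Hf. lia.
  - apply (is_RInt_gen_plus (fun x => sum_f_R0 (fun k => f k x) N) (f (S N))).
    + apply IH. intros k Hk. apply Hf. lia.
    + apply Hf. lia.
Qed.

Lemma is_RInt_gen_poisson_mul_rho_density (z k : nat) (r : R) :
  (1 <= z)%nat -> 0 <= r ->
  is_RInt_gen
    (fun kappa => (kappa * INR z * r) ^ k / INR (Factorial.fact k)
                  * exp (- (kappa * INR z * r)) * rho_density z kappa)
    (at_point 0) (Rbar_locally p_infty)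
    (Binomial.C (k + z - 1) k * r ^ k / (1 + r) ^ (k + z)).
Proof.
  intros Hz Hr. destruct z as [|n]; [lia|].
  set (Z := INR (S n)). assert (HZ : 0 < Z) by (apply lt_0_INR; lia).
  set (A := (Z * r) ^ k / INR (Factorial.fact k) * (Z ^ S n / INR (Factorial.fact n))).
  apply (is_RInt_gen_ext_R (fun x => A * (x ^ (k + n) * exp (- (Z * (1 + r)) * x)))).
  { intros x. unfold rho_density, A. fold Z.
    replace (S n - 1)%nat with n by lia.
    replace (- (Z * (1 + r)) * x) with (- (x * Z * r) + - Z * x) by ring.
    rewrite exp_plus, pow_add, !Rpow_mult_distr. unfold Rdiv. ring. }
  replace (Binomial.C (k + S n - 1) k * r ^ k / (1 + r) ^ (k + S n))
    with (A * (INR (Factorial.fact (k + n)) / (Z * (1 + r)) ^ S (k + n))).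
  - apply (is_RInt_gen_scal (fun x => x ^ (k + n) * exp (- (Z * (1 + r)) * x))).
    apply is_RInt_gen_pow_mul_exp_opp. nra.
  - unfold Binomial.C, A.
    replace (k + S n - 1)%nat with (k + n)%nat by lia.
    replace (k + n - k)%nat with n by lia.
    replace (k + S n)%nat with (S (k + n)) by lia.
    rewrite !Rpow_mult_distr. simpl pow. rewrite !pow_add.
    assert (Z ^ k <> 0) by (apply pow_nonzero; lra).
    assert (Z ^ n <> 0) by (apply pow_nonzero; lra).
    assert ((1 + r) ^ k <> 0) by (apply pow_nonzero; lra).
    assert ((1 + r) ^ n <> 0) by (apply pow_nonzero; lra).
    assert (Hk := INR_fact_neq_0 k). assert (Hn := INR_fact_neq_0 n).
    field. repeat split; lra.
Qed.

Lemma is_RInt_gen_rho_density (z : nat) :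
  (1 <= z)%nat ->
  is_RInt_gen (rho_density z) (at_point 0) (Rbar_locally p_infty) 1.
Proof.
  intros Hz.
  assert (H := is_RInt_gen_poisson_mul_rho_density z 0 0 Hz (Rle_refl 0)).
  replace (Binomial.C (0 + z - 1) 0 * 0 ^ 0 / (1 + 0) ^ (0 + z)) with 1 in H.
  - refine (is_RInt_gen_ext_R _ _ _ (fun x => _) H).
    rewrite Rmult_0_r, Ropp_0, exp_0. simpl. field.
  - unfold Binomial.C. rewrite Rplus_0_r, pow1. simpl.
    replace (z - 1 - 0)%nat with (z - 1)%nat by lia.
    field. apply INR_fact_neq_0.
Qed.

Lemma negative_binomial_term (p q : R) (z k : nat) (c : R) :
  p + q = 1 -> 0 < p -> (k <= z)%nat ->
  (1 - (q / p) ^ (z - k)) * (c * (q / p) ^ k / (1 + q / p) ^ (k + z))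
  = (p ^ z * q ^ k - q ^ z * p ^ k) * c.
Proof.
  intros Hpq Hp Hk.
  replace (1 + q / p) with (/ p) by (field_simplify_eq; lra).
  destruct (Nat.le_exists_sub k z Hk) as [j [-> _]].
  replace (j + k - k)%nat with j by lia.
  unfold Rdiv. rewrite !pow_inv, !Rpow_mult_distr, !pow_inv, !pow_add.
  assert (p ^ j <> 0) by (apply pow_nonzero; lra).
  assert (p ^ k <> 0) by (apply pow_nonzero; lra).
  field. lra.
Qed.

Theorem mainTheorem6 (q : R) (z : nat) :
  0 < q < 1 / 2 -> (1 <= z)%nat ->
  P_SN q z = P_kappa q z 1 /\
  is_RInt_gen (fun kappa => P_kappa q z kappa * rho_density z kappa)
    (at_point 0) (Rbar_locally p_infty) (P_exact q z).
Proof.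
  intros Hq Hz. split.
  { unfold P_SN, P_kappa; cbv zeta. f_equal. apply sum_eq. intros k _.
    unfold Rdiv. ring_simplify (1 * INR z * (q * / (1 - q))). ring. }
  set (r := q / (1 - q)). assert (Hr : 0 <= r) by (unfold r; apply Rle_div_r; lra).
  set (weight := fun k kappa => (kappa * INR z * r) ^ k / INR (Factorial.fact k)
                                * exp (- (kappa * INR z * r)) * rho_density z kappa).
  apply (is_RInt_gen_ext_R (fun kappa => rho_density z kappa
           - sum_f_R0 (fun k => (1 - r ^ (z - k)) * weight k kappa) (z - 1))).
  { intros x. unfold P_kappa, weight. fold r.
    rewrite Rmult_minus_distr_r, Rmult_1_l, (Rmult_comm (sum_f_R0 _ _)), scal_sum.
    f_equal. apply sum_eq. intros k _. ring. }
  replace (P_exact q z) with (1 - sum_f_R0 (fun k => (1 - r ^ (z - k))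
      * (Binomial.C (k + z - 1) k * r ^ k / (1 + r) ^ (k + z))) (z - 1)).
  - apply (is_RInt_gen_minus (rho_density z)); [apply is_RInt_gen_rho_density; lia|].
    apply (is_RInt_gen_sum_f_R0 (fun k kappa => (1 - r ^ (z - k)) * weight k kappa)).
    intros k _. apply (is_RInt_gen_scal (weight k)).
    apply is_RInt_gen_poisson_mul_rho_density; lia || lra.
  - unfold P_exact. f_equal. apply sum_eq. intros k Hk.
    apply negative_binomial_term; lra || lia.
Qed.
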